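(* If $M\Rrightarrow N_1$ and $M\Rrightarrow N_2$, then there exists $N$ such that $N_1\Rrightarrow N$ and $N_2\Rrightarrow N$.
   Context: Terms of $\lambda^{\triangleright}$: transition variables $\alpha,\beta,\dots$; a transition $A,B$ is a finite sequence of transition variables ($\varepsilon$ empty, $AB$ concatenation). Types $\tau ::= b \mid \tau\to\tau \mid \triangleright_\alpha\tau \mid \forall\alpha.\tau$. Terms $M ::= x \mid M\,M \mid \lambda x{:}\tau.M \mid \blacktriangleright_\alpha M \mid \blacktriangleleft_\alpha M \mid \Lambda\alpha.M \mid M\,A$ (quotation, unquotation, transition abstraction, instantiation by a transition); $x$ is bound in $\lambda x{:}\tau.M$ and $\alpha$ in $\Lambda\alpha.M$. For $A=\alpha_1\cdots\alpha_n$: $\blacktriangleright_A M=\blacktriangleright_{\alpha_1}\cdots\blacktriangleright_{\alpha_n}M$, $\blacktriangleleft_A M=\blacktriangleleft_{\alpha_n}\cdots\blacktriangleleft_{\alpha_1}M$ (identity when $A=\varepsilon$), and similarly $\triangleright_A\tau$. $M[x:=N]$ is capture-avoiding term substitution; $M[\alpha:=B]$ is capture-avoiding substitution of a transition $B$ for $\alpha$, replacing $\alpha$ by $B$ in transitions and $\triangleright_\alpha,\blacktriangleright_\alpha,\blacktriangleleft_\alpha$ by $\triangleright_B,\blacktriangleright_B,\blacktriangleleft_B$. Parallel reduction $M\Rrightarrow N$ is inductively defined by: $x\Rrightarrow x$; $M\Rrightarrow N\Rightarrow \lambda x{:}\tau.M\Rrightarrow\lambda x{:}\tau.N$; $M_1\Rrightarrow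 N_1, M_2\Rrightarrow N_2\Rightarrow M_1M_2\Rrightarrow N_1N_2$; $M_1\Rrightarrow N_1, M_2\Rrightarrow N_2\Rightarrow(\lambda x{:}\tau.M_1)M_2\Rrightarrow N_1[x:=N_2]$; $M\Rrightarrow N\Rightarrow\Lambda\alpha.M\Rrightarrow\Lambda\alpha.N$; $M\Rrightarrow N\Rightarrow M\,A\Rrightarrow N\,A$; $M\Rrightarrow N\Rightarrow(\Lambda\alpha.M)\,A\Rrightarrow N[\alpha:=A]$; $M\Rrightarrow N\Rightarrow\blacktriangleright_\alpha M\Rrightarrow\blacktriangleright_\alpha N$; $M\Rrightarrow N\Rightarrow\blacktriangleleft_\alpha M\Rrightarrow\blacktriangleleft_\alpha N$; and, for any transition $A$, $M\Rrightarrow N\Rightarrow\blacktriangleleft_A\blacktriangleright_A M\Rrightarrow N$. *)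

(* Syntax of lambda^triangleright with de Bruijn indices:
   term variables and transition variables live in two separate index
   namespaces.  Lam binds term index 0; TLam (Lambda alpha) and TAll bind
   transition index 0. *)
From Stdlib Require Import List Arith.
Import ListNotations.

Definition tvar := nat.
Definition transition := list tvar.

Inductive ty : Type :=
| TBase  : nat -> ty
| TArr   : ty -> ty -> ty
| TLater : tvar -> ty -> ty
| TAll   : ty -> ty.

Inductive tm : Type :=
| Var     : nat -> tm
| App     : tm -> tm -> tm
| Lam     : ty -> tm -> tm
| Quote   : tvar -> tm -> tm
| Unquote : tvar -> tm -> tm
| TLam    : tm -> tm
| TApp    : tm -> transition -> tm.

Definition later_seq (A : transition) (t : ty) : ty :=
  fold_right TLater t A.
Definition quote_seq (A : transition) (M : tm) : tm :=
  fold_right Quote M A.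
(* black<|_A M = black<|_an ... black<|_a1 M *)
Definition unquote_seq (A : transition) (M : tm) : tm :=
  fold_left (fun acc a => Unquote a acc) A M.

Definition tshift_var (c i : nat) : nat := if i <? c then i else S i.
Definition tshift_trans (c : nat) (A : transition) : transition :=
  map (tshift_var c) A.

Fixpoint tshift_ty (c : nat) (t : ty) : ty :=
  match t with
  | TBase b => TBase b
  | TArr t1 t2 => TArr (tshift_ty c t1) (tshift_ty c t2)
  | TLater a t1 => TLater (tshift_var c a) (tshift_ty c t1)
  | TAll t1 => TAll (tshift_ty (S c) t1)
  end.

Fixpoint tshift_tm (c : nat) (M : tm) : tm :=
  match M with
  | Var x => Var x
  | App M1 M2 => App (tshift_tm c M1) (tshift_tm c M2)
  | Lam t M1 => Lam (tshift_ty c t) (tshift_tm c M1)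
  | Quote a M1 => Quote (tshift_var c a) (tshift_tm c M1)
  | Unquote a M1 => Unquote (tshift_var c a) (tshift_tm c M1)
  | TLam M1 => TLam (tshift_tm (S c) M1)
  | TApp M1 A => TApp (tshift_tm c M1) (tshift_trans c A)
  end.

Fixpoint shift_tm (c : nat) (M : tm) : tm :=
  match M with
  | Var x => Var (if x <? c then x else S x)
  | App M1 M2 => App (shift_tm c M1) (shift_tm c M2)
  | Lam t M1 => Lam t (shift_tm (S c) M1)
  | Quote a M1 => Quote a (shift_tm c M1)
  | Unquote a M1 => Unquote a (shift_tm c M1)
  | TLam M1 => TLam (shift_tm c M1)
  | TApp M1 A => TApp (shift_tm c M1) A
  end.

Definition tsubst_var (k : nat) (B : transition) (i : nat) : transition :=
  if i =? k then B else if k <? i then [pred i] else [i].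
Definition tsubst_trans (k : nat) (B : transition) (A : transition) : transition :=
  flat_map (tsubst_var k B) A.

Fixpoint tsubst_ty (k : nat) (B : transition) (t : ty) : ty :=
  match t with
  | TBase b => TBase b
  | TArr t1 t2 => TArr (tsubst_ty k B t1) (tsubst_ty k B t2)
  | TLater a t1 => later_seq (tsubst_var k B a) (tsubst_ty k B t1)
  | TAll t1 => TAll (tsubst_ty (S k) (tshift_trans 0 B) t1)
  end.

Fixpoint tsubst_tm (k : nat) (B : transition) (M : tm) : tm :=
  match M with
  | Var x => Var x
  | App M1 M2 => App (tsubst_tm k B M1) (tsubst_tm k B M2)
  | Lam t M1 => Lam (tsubst_ty k B t) (tsubst_tm k B M1)
  | Quote a M1 => quote_seq (tsubst_var k B a) (tsubst_tm k B M1)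
  | Unquote a M1 => unquote_seq (tsubst_var k B a) (tsubst_tm k B M1)
  | TLam M1 => TLam (tsubst_tm (S k) (tshift_trans 0 B) M1)
  | TApp M1 A => TApp (tsubst_tm k B M1) (tsubst_trans k B A)
  end.

Fixpoint subst_tm (k : nat) (N : tm) (M : tm) : tm :=
  match M with
  | Var x => if x =? k then N else if k <? x then Var (pred x) else Var x
  | App M1 M2 => App (subst_tm k N M1) (subst_tm k N M2)
  | Lam t M1 => Lam t (subst_tm (S k) (shift_tm 0 N) M1)
  | Quote a M1 => Quote a (subst_tm k N M1)
  | Unquote a M1 => Unquote a (subst_tm k N M1)
  | TLam M1 => TLam (subst_tm k (tshift_tm 0 N) M1)
  | TApp M1 A => TApp (subst_tm k N M1) A
  end.

Definition subst0 (M N : tm) : tm := subst_tm 0 N M.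
Definition tsubst0 (M : tm) (A : transition) : tm := tsubst_tm 0 A M.

Inductive par : tm -> tm -> Prop :=
| par_var : forall x, par (Var x) (Var x)
| par_lam : forall t M N, par M N -> par (Lam t M) (Lam t N)
| par_app : forall M1 N1 M2 N2, par M1 N1 -> par M2 N2 ->
    par (App M1 M2) (App N1 N2)
| par_beta : forall t M1 N1 M2 N2, par M1 N1 -> par M2 N2 ->
    par (App (Lam t M1) M2) (subst0 N1 N2)
| par_tlam : forall M N, par M N -> par (TLam M) (TLam N)
| par_tapp : forall M N A, par M N -> par (TApp M A) (TApp N A)
| par_tbeta : forall M N A, par M N -> par (TApp (TLam M) A) (tsubst0 N A)
| par_quote : forall a M N, par M N -> par (Quote a M) (Quote a N)
| par_unquote : forall a M N, par M N -> par (Unquote a M) (Unquote a N)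
| par_cancel : forall A M N, par M N ->
    par (unquote_seq A (quote_seq A M)) N.

Notation "M ⇛ N" := (par M N) (at level 70).

(* Takahashi's method: every term M has a development D that every parallel
   reduct of M reduces to in one more parallel step (the triangle property),
   so two parallel reducts of M are joined by D.  The only non-standard redex
   is the cancellation [<|_A |>_A W]; a parallel reduct of such a term either
   contracts it or is again of the form [<|_A' |>_A' W'] with W reducing to
   W', which is what makes the cancellation case of the triangle go through. *)
From Stdlib Require Import Classical List Arith Lia Wf_nat.
Import ListNotations.

Lemma map_flat_map {X Y Z} (f : Y -> Z) (g : X -> list Y) l :
  map f (flat_map g l) = flat_map (fun x => map f (g x)) l.
Proof. induction l; simpl; auto. rewrite map_app, IHl; auto. Qed.

Lemma flat_map_map {X Y Z} (f : Y -> list Z) (g : X -> Y) l :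
  flat_map f (map g l) = flat_map (fun x => f (g x)) l.
Proof. induction l; simpl; auto. rewrite IHl; auto. Qed.

Lemma flat_map_flat_map {X Y Z} (f : Y -> list Z) (g : X -> list Y) l :
  flat_map f (flat_map g l) = flat_map (fun x => flat_map f (g x)) l.
Proof. induction l; simpl; auto. rewrite flat_map_app, IHl; auto. Qed.

Local Arguments Nat.eqb : simpl never.
Local Arguments Nat.ltb : simpl never.

Ltac index_cases :=
  unfold tshift_var, tsubst_var, tsubst_trans, tshift_trans in *;
  repeat (match goal with
          | |- context [?a <? ?b] => destruct (Nat.ltb_spec a b)
          | |- context [?a =? ?b] => destruct (Nat.eqb_spec a b)
          end; simpl in *; unfold tshift_var, tsubst_var in *);
  try (f_equal; lia); try lia; auto.

Lemma tshift_var_comm c d i : c <= d ->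
  tshift_var (S d) (tshift_var c i) = tshift_var c (tshift_var d i).
Proof. intros; index_cases. Qed.

Lemma tsubst_var_tshift k B i : tsubst_var k B (tshift_var k i) = [i].
Proof. index_cases. Qed.

Lemma tshift_tsubst_var_above k c B i : k <= c ->
  tshift_trans c (tsubst_var k B i) =
  tsubst_var k (tshift_trans c B) (tshift_var (S c) i).
Proof. intros; unfold tsubst_var; index_cases. Qed.

Lemma tshift_tsubst_var_below k c B i : c <= k ->
  tshift_trans c (tsubst_var k B i) =
  tsubst_var (S k) (tshift_trans c B) (tshift_var c i).
Proof. intros; unfold tsubst_var; index_cases. Qed.

Lemma tsubst_trans_singleton k B i : tsubst_trans k B [i] = tsubst_var k B i.
Proof. unfold tsubst_trans; simpl; rewrite app_nil_r; auto. Qed.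

Lemma tshift_trans_comm c d A : c <= d ->
  tshift_trans (S d) (tshift_trans c A) = tshift_trans c (tshift_trans d A).
Proof.
  intros; unfold tshift_trans; rewrite !map_map.
  apply map_ext; intros; apply tshift_var_comm; auto.
Qed.

Lemma tsubst_trans_tshift k B A : tsubst_trans k B (tshift_trans k A) = A.
Proof.
  unfold tsubst_trans, tshift_trans; rewrite flat_map_map.
  induction A; simpl; auto. rewrite tsubst_var_tshift, IHA; auto.
Qed.

Lemma tshift_tsubst_trans_above k c B A : k <= c ->
  tshift_trans c (tsubst_trans k B A) =
  tsubst_trans k (tshift_trans c B) (tshift_trans (S c) A).
Proof.
  intros; unfold tsubst_trans; unfold tshift_trans at 1 3.
  rewrite map_flat_map, flat_map_map.
  apply flat_map_ext; intros; apply tshift_tsubst_var_above; auto.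
Qed.

Lemma tshift_tsubst_trans_below k c B A : c <= k ->
  tshift_trans c (tsubst_trans k B A) =
  tsubst_trans (S k) (tshift_trans c B) (tshift_trans c A).
Proof.
  intros; unfold tsubst_trans; unfold tshift_trans at 1 3.
  rewrite map_flat_map, flat_map_map.
  apply flat_map_ext; intros; apply tshift_tsubst_var_below; auto.
Qed.

Lemma tsubst_tsubst_var j k A B i : j <= k ->
  tsubst_trans k B (tsubst_var j A i) =
  tsubst_trans j (tsubst_trans k B A) (tsubst_var (S k) (tshift_trans j B) i).
Proof.
  intros. unfold tsubst_var at 1 2.
  destruct (Nat.eqb_spec i j).
  - subst. destruct (Nat.eqb_spec j (S k)); [lia|].
    destruct (Nat.ltb_spec (S k) j); [lia|].
    rewrite tsubst_trans_singleton. unfold tsubst_var. rewrite Nat.eqb_refl; auto.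
  - destruct (Nat.ltb_spec j i); rewrite tsubst_trans_singleton.
    + destruct (Nat.eqb_spec i (S k)).
      * subst. simpl. unfold tsubst_var. rewrite Nat.eqb_refl, tsubst_trans_tshift; auto.
      * destruct (Nat.ltb_spec (S k) i); rewrite tsubst_trans_singleton; index_cases.
    + destruct (Nat.eqb_spec i (S k)); [lia|].
      destruct (Nat.ltb_spec (S k) i); [lia|].
      rewrite tsubst_trans_singleton; index_cases.
Qed.

Lemma tsubst_tsubst_trans j k A B X : j <= k ->
  tsubst_trans k B (tsubst_trans j A X) =
  tsubst_trans j (tsubst_trans k B A) (tsubst_trans (S k) (tshift_trans j B) X).
Proof.
  intros; unfold tsubst_trans at 1 2 3 5; rewrite !flat_map_flat_map.
  apply flat_map_ext; intros; apply tsubst_tsubst_var; auto.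
Qed.

Lemma later_seq_app A B t : later_seq (A ++ B) t = later_seq A (later_seq B t).
Proof. apply fold_right_app. Qed.

Lemma quote_seq_app A B M : quote_seq (A ++ B) M = quote_seq A (quote_seq B M).
Proof. apply fold_right_app. Qed.

Lemma unquote_seq_app A B M :
  unquote_seq (A ++ B) M = unquote_seq B (unquote_seq A M).
Proof. apply fold_left_app. Qed.

Lemma tshift_ty_later_seq c A t :
  tshift_ty c (later_seq A t) = later_seq (tshift_trans c A) (tshift_ty c t).
Proof. induction A; simpl; auto. rewrite IHA; auto. Qed.

Lemma tsubst_ty_later_seq k B A t :
  tsubst_ty k B (later_seq A t) = later_seq (tsubst_trans k B A) (tsubst_ty k B t).
Proof. induction A; simpl; auto. rewrite IHA, later_seq_app; auto. Qed.

Lemma tshift_tm_quote_seq c A M :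
  tshift_tm c (quote_seq A M) = quote_seq (tshift_trans c A) (tshift_tm c M).
Proof. induction A; simpl; auto. rewrite IHA; auto. Qed.

Lemma tshift_tm_unquote_seq c A M :
  tshift_tm c (unquote_seq A M) = unquote_seq (tshift_trans c A) (tshift_tm c M).
Proof. revert M; induction A; intros; simpl; auto. Qed.

Lemma tsubst_tm_quote_seq k B A M :
  tsubst_tm k B (quote_seq A M) = quote_seq (tsubst_trans k B A) (tsubst_tm k B M).
Proof. induction A; simpl; auto. rewrite IHA, quote_seq_app; auto. Qed.

Lemma tsubst_tm_unquote_seq k B A M :
  tsubst_tm k B (unquote_seq A M) =
  unquote_seq (tsubst_trans k B A) (tsubst_tm k B M).
Proof.
  revert M; induction A as [|a A IHA]; intros; auto.
  change (tsubst_tm k B (unquote_seq A (Unquote a M)) =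
          unquote_seq (tsubst_var k B a ++ tsubst_trans k B A) (tsubst_tm k B M)).
  rewrite IHA, unquote_seq_app; reflexivity.
Qed.

Lemma shift_tm_quote_seq c A M :
  shift_tm c (quote_seq A M) = quote_seq A (shift_tm c M).
Proof. induction A; simpl; auto. rewrite IHA; auto. Qed.

Lemma shift_tm_unquote_seq c A M :
  shift_tm c (unquote_seq A M) = unquote_seq A (shift_tm c M).
Proof. revert M; induction A; intros; simpl; auto. Qed.

Lemma subst_tm_quote_seq k N A M :
  subst_tm k N (quote_seq A M) = quote_seq A (subst_tm k N M).
Proof. induction A; simpl; auto. rewrite IHA; auto. Qed.

Lemma subst_tm_unquote_seq k N A M :
  subst_tm k N (unquote_seq A M) = unquote_seq A (subst_tm k N M).
Proof. revert M; induction A; intros; simpl; auto. Qed.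

Local Arguments later_seq : simpl never.
Local Arguments quote_seq : simpl never.
Local Arguments unquote_seq : simpl never.

Lemma tshift_ty_comm t : forall c d, c <= d ->
  tshift_ty (S d) (tshift_ty c t) = tshift_ty c (tshift_ty d t).
Proof.
  induction t; intros; simpl; f_equal; auto using tshift_var_comm.
  apply IHt; lia.
Qed.

Lemma tsubst_ty_tshift t : forall k B, tsubst_ty k B (tshift_ty k t) = t.
Proof.
  induction t; intros; simpl; rewrite ?tsubst_var_tshift; unfold later_seq; simpl;
    f_equal; auto.
Qed.

Lemma tshift_tsubst_ty_above t : forall k c B, k <= c ->
  tshift_ty c (tsubst_ty k B t) = tsubst_ty k (tshift_trans c B) (tshift_ty (S c) t).
Proof.
  induction t; intros; simpl; f_equal; auto.
  - rewrite tshift_ty_later_seq, tshift_tsubst_var_above, IHt; auto.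
  - rewrite IHt, tshift_trans_comm by lia; auto.
Qed.

Lemma tshift_tsubst_ty_below t : forall k c B, c <= k ->
  tshift_ty c (tsubst_ty k B t) = tsubst_ty (S k) (tshift_trans c B) (tshift_ty c t).
Proof.
  induction t; intros; simpl; f_equal; auto.
  - rewrite tshift_ty_later_seq, tshift_tsubst_var_below, IHt; auto.
  - rewrite IHt, tshift_trans_comm by lia; auto.
Qed.

Lemma tsubst_tsubst_ty t : forall j k A B, j <= k ->
  tsubst_ty k B (tsubst_ty j A t) =
  tsubst_ty j (tsubst_trans k B A) (tsubst_ty (S k) (tshift_trans j B) t).
Proof.
  induction t; intros; simpl; try (f_equal; auto; fail).
  - rewrite !tsubst_ty_later_seq, IHt, <- !tsubst_trans_singleton by auto.
    f_equal; apply tsubst_tsubst_trans; auto.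
  - rewrite IHt, tshift_tsubst_trans_below, tshift_trans_comm by lia; auto.
Qed.

Lemma tshift_tm_comm M : forall c d, c <= d ->
  tshift_tm (S d) (tshift_tm c M) = tshift_tm c (tshift_tm d M).
Proof.
  induction M; intros; simpl; f_equal;
    auto using tshift_ty_comm, tshift_var_comm, tshift_trans_comm.
  apply IHM; lia.
Qed.

Lemma tsubst_tm_tshift M : forall k B, tsubst_tm k B (tshift_tm k M) = M.
Proof.
  induction M; intros; simpl; rewrite ?tsubst_var_tshift;
    unfold quote_seq, unquote_seq; simpl; f_equal; auto using tsubst_ty_tshift, tsubst_trans_tshift.
Qed.

Lemma tshift_tsubst_tm_above M : forall k c B, k <= c ->
  tshift_tm c (tsubst_tm k B M) = tsubst_tm k (tshift_trans c B) (tshift_tm (S c) M).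
Proof.
  induction M; intros; simpl; f_equal;
    auto using tshift_tsubst_ty_above, tshift_tsubst_trans_above.
  - rewrite tshift_tm_quote_seq, tshift_tsubst_var_above, IHM; auto.
  - rewrite tshift_tm_unquote_seq, tshift_tsubst_var_above, IHM; auto.
  - rewrite IHM, tshift_trans_comm by lia; auto.
Qed.

Lemma tshift_tsubst_tm_below M : forall k c B, c <= k ->
  tshift_tm c (tsubst_tm k B M) = tsubst_tm (S k) (tshift_trans c B) (tshift_tm c M).
Proof.
  induction M; intros; simpl; f_equal;
    auto using tshift_tsubst_ty_below, tshift_tsubst_trans_below.
  - rewrite tshift_tm_quote_seq, tshift_tsubst_var_below, IHM; auto.
  - rewrite tshift_tm_unquote_seq, tshift_tsubst_var_below, IHM; auto.
  - rewrite IHM, tshift_trans_comm by lia; auto.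
Qed.

Lemma tsubst_tsubst_tm M : forall j k A B, j <= k ->
  tsubst_tm k B (tsubst_tm j A M) =
  tsubst_tm j (tsubst_trans k B A) (tsubst_tm (S k) (tshift_trans j B) M).
Proof.
  induction M; intros; simpl;
    try (f_equal; auto using tsubst_tsubst_ty, tsubst_tsubst_trans; fail).
  - rewrite !tsubst_tm_quote_seq, IHM, <- !tsubst_trans_singleton by auto.
    f_equal; apply tsubst_tsubst_trans; auto.
  - rewrite !tsubst_tm_unquote_seq, IHM, <- !tsubst_trans_singleton by auto.
    f_equal; apply tsubst_tsubst_trans; auto.
  - rewrite IHM, tshift_tsubst_trans_below, tshift_trans_comm by lia; auto.
Qed.

Lemma shift_tm_comm M : forall c d, c <= d ->
  shift_tm (S d) (shift_tm c M) = shift_tm c (shift_tm d M).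
Proof.
  induction M; intros; simpl; try (f_equal; auto; apply IHM; lia);
    try (f_equal; auto; fail).
  index_cases.
Qed.

Lemma shift_tshift_tm M : forall c d,
  shift_tm c (tshift_tm d M) = tshift_tm d (shift_tm c M).
Proof. induction M; intros; simpl; f_equal; auto. Qed.

Lemma shift_tsubst_tm M : forall c k B,
  shift_tm c (tsubst_tm k B M) = tsubst_tm k B (shift_tm c M).
Proof.
  induction M; intros; simpl; f_equal; auto.
  - rewrite shift_tm_quote_seq, IHM; auto.
  - rewrite shift_tm_unquote_seq, IHM; auto.
Qed.

Lemma shift_subst_tm_above M : forall k c N, k <= c ->
  shift_tm c (subst_tm k N M) = subst_tm k (shift_tm c N) (shift_tm (S c) M).
Proof.
  induction M; intros; simpl; try (f_equal; auto; fail).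
  - index_cases.
  - rewrite IHM, shift_tm_comm by lia; auto.
  - rewrite IHM, shift_tshift_tm by lia; auto.
Qed.

Lemma shift_subst_tm_below M : forall k c N, c <= k ->
  shift_tm c (subst_tm k N M) = subst_tm (S k) (shift_tm c N) (shift_tm c M).
Proof.
  induction M; intros; simpl; try (f_equal; auto; fail).
  - index_cases.
  - rewrite IHM, shift_tm_comm by lia; auto.
  - rewrite IHM, shift_tshift_tm by lia; auto.
Qed.

Lemma tshift_subst_tm M : forall c k N,
  tshift_tm c (subst_tm k N M) = subst_tm k (tshift_tm c N) (tshift_tm c M).
Proof.
  induction M; intros; simpl; try (f_equal; auto; fail).
  - index_cases.
  - rewrite IHM, shift_tshift_tm; auto.
  - rewrite IHM, tshift_tm_comm by lia; auto.
Qed.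

Lemma tsubst_subst_tm M : forall k B j N,
  tsubst_tm k B (subst_tm j N M) = subst_tm j (tsubst_tm k B N) (tsubst_tm k B M).
Proof.
  induction M; intros; simpl; try (f_equal; auto; fail).
  - index_cases.
  - rewrite IHM, shift_tsubst_tm; auto.
  - rewrite subst_tm_quote_seq, IHM; auto.
  - rewrite subst_tm_unquote_seq, IHM; auto.
  - rewrite IHM, tshift_tsubst_tm_below by lia; auto.
Qed.

Lemma subst_shift_tm M : forall k N, subst_tm k N (shift_tm k M) = M.
Proof. induction M; intros; simpl; try (f_equal; auto; fail). index_cases. Qed.

Lemma subst_subst_tm M : forall j k P N, j <= k ->
  subst_tm k N (subst_tm j P M) =
  subst_tm j (subst_tm k N P) (subst_tm (S k) (shift_tm j N) M).
Proof.
  induction M; intros; simpl; try (f_equal; auto; fail).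
  - index_cases; rewrite subst_shift_tm; auto.
  - rewrite IHM, shift_subst_tm_below, shift_tm_comm by lia; auto.
  - rewrite IHM, tshift_subst_tm, shift_tshift_tm; auto.
Qed.

Lemma subst_tsubst_tm M : forall k N j B,
  subst_tm k N (tsubst_tm j B M) = tsubst_tm j B (subst_tm k (tshift_tm j N) M).
Proof.
  induction M; intros; simpl; try (f_equal; auto; fail).
  - index_cases; rewrite tsubst_tm_tshift; auto.
  - rewrite IHM, shift_tshift_tm; auto.
  - rewrite subst_tm_quote_seq, IHM; auto.
  - rewrite subst_tm_unquote_seq, IHM; auto.
  - rewrite IHM, tshift_tm_comm by lia; auto.
Qed.

Lemma par_quote_seq A M N : M ⇛ N -> quote_seq A M ⇛ quote_seq A N.
Proof. intros; induction A; auto. apply par_quote; auto. Qed.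

Lemma par_unquote_seq A : forall M N, M ⇛ N -> unquote_seq A M ⇛ unquote_seq A N.
Proof. induction A; intros; auto. apply IHA, par_unquote; auto. Qed.

Lemma par_shift M N : M ⇛ N -> forall c, shift_tm c M ⇛ shift_tm c N.
Proof.
  induction 1; intros; simpl; try (constructor; auto; fail).
  - unfold subst0; rewrite shift_subst_tm_above by lia. apply par_beta; auto.
  - unfold tsubst0; rewrite shift_tsubst_tm. apply par_tbeta; auto.
  - rewrite shift_tm_unquote_seq, shift_tm_quote_seq. apply par_cancel; auto.
Qed.

Lemma par_tshift M N : M ⇛ N -> forall c, tshift_tm c M ⇛ tshift_tm c N.
Proof.
  induction 1; intros; simpl; try (constructor; auto; fail).
  - unfold subst0; rewrite tshift_subst_tm. apply par_beta; auto.
  - unfold tsubst0; rewrite tshift_tsubst_tm_above by lia. apply par_tbeta; auto.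
  - rewrite tshift_tm_unquote_seq, tshift_tm_quote_seq. apply par_cancel; auto.
Qed.

Lemma par_subst M M' : M ⇛ M' ->
  forall k N N', N ⇛ N' -> subst_tm k N M ⇛ subst_tm k N' M'.
Proof.
  induction 1; intros; simpl; try (constructor; auto using par_shift, par_tshift; fail).
  - index_cases; constructor.
  - unfold subst0; rewrite subst_subst_tm by lia. apply par_beta; auto using par_shift.
  - unfold tsubst0; rewrite subst_tsubst_tm. apply par_tbeta; auto using par_tshift.
  - rewrite subst_tm_unquote_seq, subst_tm_quote_seq. apply par_cancel; auto.
Qed.

Lemma par_tsubst M M' : M ⇛ M' -> forall k B, tsubst_tm k B M ⇛ tsubst_tm k B M'.
Proof.
  induction 1; intros; simpl;
    try (constructor; auto; fail); auto using par_quote_seq, par_unquote_seq.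
  - unfold subst0; rewrite tsubst_subst_tm. apply par_beta; auto.
  - unfold tsubst0; rewrite tsubst_tsubst_tm by lia. apply par_tbeta; auto.
  - rewrite tsubst_tm_unquote_seq, tsubst_tm_quote_seq. apply par_cancel; auto.
Qed.

Definition cancel_seq (A : transition) (W : tm) : tm := unquote_seq A (quote_seq A W).

Lemma cancel_seq_snoc A a W :
  cancel_seq (A ++ [a]) W = Unquote a (cancel_seq A (Quote a W)).
Proof. unfold cancel_seq; rewrite unquote_seq_app, quote_seq_app; reflexivity. Qed.

Lemma cancel_seq_cases A W :
  cancel_seq A W = W \/ exists A' a, cancel_seq A W = Unquote a (cancel_seq A' (Quote a W)).
Proof.
  destruct A as [|a A] using rev_ind; [left; reflexivity|].
  right; exists A, a; apply cancel_seq_snoc.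
Qed.

Lemma cancel_seq_quote_inj A : forall A' a a' W W',
  cancel_seq A (Quote a W) = cancel_seq A' (Quote a' W') -> A = A' /\ a = a' /\ W = W'.
Proof.
  induction A as [|x A IHA] using rev_ind; intros A' a a' W W' E;
    destruct A' as [|y A' _] using rev_ind;
    rewrite ?cancel_seq_snoc in E; try discriminate.
  - injection E; intros; subst; auto.
  - injection E; intros E' ->.
    destruct (IHA _ _ _ _ _ E') as [-> [_ E'']]; injection E''; intros; subst; auto.
Qed.

(* In the cancellation case of an inversion, [<|_A |>_A M] is either [M]
   itself (A empty, use the induction hypothesis) or headed by [Unquote]. *)
Ltac cancel_case :=
  match goal with
  | E : unquote_seq ?A (quote_seq ?A ?M) = _ |- _ =>
      change (unquote_seq A (quote_seq A M)) with (cancel_seq A M) in *;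
      let Ec := fresh "Ec" in
      destruct (cancel_seq_cases A M) as [Ec | (? & ? & Ec)]; rewrite Ec in *
  end.

Lemma par_var_inv x N : Var x ⇛ N -> N = Var x.
Proof.
  intros H; remember (Var x) as T eqn:E; induction H; try discriminate; auto.
  cancel_case; [auto | discriminate].
Qed.

Lemma par_lam_inv t M N : Lam t M ⇛ N -> exists N', N = Lam t N' /\ M ⇛ N'.
Proof.
  intros H; remember (Lam t M) as T eqn:E; induction H; try discriminate.
  - injection E; intros; subst; eauto.
  - cancel_case; [auto | discriminate].
Qed.

Lemma par_tlam_inv M N : TLam M ⇛ N -> exists N', N = TLam N' /\ M ⇛ N'.
Proof.
  intros H; remember (TLam M) as T eqn:E; induction H; try discriminate.
  - injection E; intros; subst; eauto.
  - cancel_case; [auto | discriminate].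
Qed.

Lemma par_quote_inv a M N : Quote a M ⇛ N -> exists N', N = Quote a N' /\ M ⇛ N'.
Proof.
  intros H; remember (Quote a M) as T eqn:E; induction H; try discriminate.
  - injection E; intros; subst; eauto.
  - cancel_case; [auto | discriminate].
Qed.

Lemma par_app_inv M1 M2 N : App M1 M2 ⇛ N ->
  (exists N1 N2, N = App N1 N2 /\ M1 ⇛ N1 /\ M2 ⇛ N2) \/
  (exists t M11 N11 N2, M1 = Lam t M11 /\ N = subst0 N11 N2 /\ M11 ⇛ N11 /\ M2 ⇛ N2).
Proof.
  intros H; remember (App M1 M2) as T eqn:E; induction H; try discriminate.
  - injection E; intros; subst; left; eauto 6.
  - injection E; intros; subst; right; eauto 8.
  - cancel_case; [auto | discriminate].
Qed.

Lemma par_tapp_inv M1 A N : TApp M1 A ⇛ N ->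
  (exists N1, N = TApp N1 A /\ M1 ⇛ N1) \/
  (exists M11 N11, M1 = TLam M11 /\ N = tsubst0 N11 A /\ M11 ⇛ N11).
Proof.
  intros H; remember (TApp M1 A) as T eqn:E; induction H; try discriminate.
  - injection E; intros; subst; left; eauto 6.
  - injection E; intros; subst; right; eauto 8.
  - cancel_case; [auto | discriminate].
Qed.

Lemma par_unquote_inv a X N : Unquote a X ⇛ N ->
  (exists X', N = Unquote a X' /\ X ⇛ X') \/
  (exists A M0, X = cancel_seq A (Quote a M0) /\ M0 ⇛ N).
Proof.
  intros H; remember (Unquote a X) as T eqn:E; induction H; try discriminate.
  - injection E; intros; subst; left; eauto.
  - cancel_case; [auto |]. injection E; intros; subst; right; eauto.
Qed.

Lemma par_cancel_seq_inv A : forall W N, cancel_seq A W ⇛ N ->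
  exists A' W', N = cancel_seq A' W' /\ W ⇛ W'.
Proof.
  induction A as [|a A IHA] using rev_ind; intros W N H.
  - exists [], N; auto.
  - rewrite cancel_seq_snoc in H.
    apply par_unquote_inv in H.
    destruct H as [(X' & -> & HX) | (A1 & M0 & E & HM)].
    + destruct (IHA _ _ HX) as (A' & Q & -> & HQ).
      apply par_quote_inv in HQ.
      destruct HQ as (W' & -> & HW).
      exists (A' ++ [a]), W'; rewrite cancel_seq_snoc; auto.
    + apply cancel_seq_quote_inj in E.
      destruct E as (_ & _ & ->).
      exists [], N; auto.
Qed.

Definition development (M D : tm) : Prop := forall N, M ⇛ N -> N ⇛ D.

Lemma development_var x : development (Var x) (Var x).
Proof. intros N H; apply par_var_inv in H as ->; constructor. Qed.

Lemma development_lam t M D : development M D -> development (Lam t M) (Lam t D).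
Proof. intros HD N H; apply par_lam_inv in H as (N' & -> & H); constructor; auto. Qed.

Lemma development_tlam M D : development M D -> development (TLam M) (TLam D).
Proof. intros HD N H; apply par_tlam_inv in H as (N' & -> & H); constructor; auto. Qed.

Lemma development_quote a M D :
  development M D -> development (Quote a M) (Quote a D).
Proof. intros HD N H; apply par_quote_inv in H as (N' & -> & H); constructor; auto. Qed.

Lemma development_beta t M1 M2 D1 D2 : development M1 D1 -> development M2 D2 ->
  development (App (Lam t M1) M2) (subst0 D1 D2).
Proof.
  intros HD1 HD2 N H.
  apply par_app_inv in H as [(N1 & N2 & -> & H1 & H2) | (t' & M' & N1 & N2 & E & -> & H1 & H2)].
  - apply par_lam_inv in H1 as (N1' & -> & H1). apply par_beta; auto.
  - injection E; intros; subst. apply par_subst; auto.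
Qed.

Lemma development_app M1 M2 D1 D2 : (forall t M11, M1 <> Lam t M11) ->
  development M1 D1 -> development M2 D2 -> development (App M1 M2) (App D1 D2).
Proof.
  intros Hn HD1 HD2 N H.
  apply par_app_inv in H as [(N1 & N2 & -> & H1 & H2) | (t & M11 & _ & _ & E & _)].
  - constructor; auto.
  - exfalso; eapply Hn; eauto.
Qed.

Lemma development_tbeta M D A :
  development M D -> development (TApp (TLam M) A) (tsubst0 D A).
Proof.
  intros HD N H.
  apply par_tapp_inv in H as [(N1 & -> & H1) | (M' & N1 & E & -> & H1)].
  - apply par_tlam_inv in H1 as (N1' & -> & H1). apply par_tbeta; auto.
  - injection E; intros; subst. apply par_tsubst; auto.
Qed.

Lemma development_tapp M D A : (forall M1, M <> TLam M1) ->
  development M D -> development (TApp M A) (TApp D A).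
Proof.
  intros Hn HD N H.
  apply par_tapp_inv in H as [(N1 & -> & H1) | (M1 & _ & E & _)].
  - constructor; auto.
  - exfalso; eapply Hn; eauto.
Qed.

Lemma development_cancel A a M D :
  development M D -> development (Unquote a (cancel_seq A (Quote a M))) D.
Proof.
  intros HD N H.
  apply par_unquote_inv in H as [(X & -> & HX) | (A1 & M1 & E & HM)].
  - apply par_cancel_seq_inv in HX as (A' & Q & -> & HQ).
    apply par_quote_inv in HQ as (M' & -> & HM).
    rewrite <- cancel_seq_snoc. apply par_cancel; auto.
  - apply cancel_seq_quote_inj in E as (_ & _ & ->); auto.
Qed.

Lemma development_unquote a X D : (forall A M, X <> cancel_seq A (Quote a M)) ->
  development X D -> development (Unquote a X) (Unquote a D).
Proof.
  intros Hn HD N H.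
  apply par_unquote_inv in H as [(X' & -> & HX) | (A & M & E & _)].
  - constructor; auto.
  - exfalso; eapply Hn; eauto.
Qed.

Fixpoint size (M : tm) : nat :=
  match M with
  | Var _ => 1
  | App M1 M2 => S (size M1 + size M2)
  | Lam _ M1 | Quote _ M1 | Unquote _ M1 | TLam M1 | TApp M1 _ => S (size M1)
  end.

Lemma size_cancel_seq A : forall W, size W <= size (cancel_seq A W).
Proof.
  induction A as [|a A IHA] using rev_ind; intros W; auto.
  rewrite cancel_seq_snoc; simpl. specialize (IHA (Quote a W)); simpl in IHA; lia.
Qed.

Lemma development_exists M : exists D, development M D.
Proof.
  induction M as [M IH] using (well_founded_ind (well_founded_ltof _ size)).
  unfold ltof in IH.
  destruct M as [x | M1 M2 | t M | a M | a X | M | M A].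
  - eauto using development_var.
  - destruct (classic (exists t M11, M1 = Lam t M11)) as [(t & M11 & ->) | Hn].
    + destruct (IH M11) as [D1 ?]; [simpl; lia|].
      destruct (IH M2) as [D2 ?]; [simpl; lia|].
      eauto using development_beta.
    + destruct (IH M1) as [D1 ?]; [simpl; lia|].
      destruct (IH M2) as [D2 ?]; [simpl; lia|].
      exists (App D1 D2); apply development_app; eauto.
  - destruct (IH M) as [D ?]; [simpl; lia|]. eauto using development_lam.
  - destruct (IH M) as [D ?]; [simpl; lia|]. eauto using development_quote.
  - destruct (classic (exists A M, X = cancel_seq A (Quote a M))) as [(A & M & ->) | Hn].
    + pose proof (size_cancel_seq A (Quote a M)); simpl in *.
      destruct (IH M) as [D ?]; [lia|]. eauto using development_cancel.
    + destruct (IH X) as [D ?]; [simpl; lia|].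
      exists (Unquote a D); apply development_unquote; eauto.
  - destruct (IH M) as [D ?]; [simpl; lia|]. eauto using development_tlam.
  - destruct (classic (exists M1, M = TLam M1)) as [(M1 & ->) | Hn].
    + destruct (IH M1) as [D ?]; [simpl; lia|]. eauto using development_tbeta.
    + destruct (IH M) as [D ?]; [simpl; lia|].
      exists (TApp D A); apply development_tapp; eauto.
Qed.

Theorem mainTheorem6 : forall M N1 N2 : tm,
  M ⇛ N1 -> M ⇛ N2 -> exists N : tm, N1 ⇛ N /\ N2 ⇛ N.
Proof.
  intros M N1 N2 H1 H2.
  destruct (development_exists M) as [D HD].
  exists D; split; apply HD; assumption.
Qed.
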